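(* Let $f\ge 0$ with $3f<N$ and let $K\in\mathbb N$. The broadcast-process protocol described in the context is a deterministic solution to the $K$-round Marker Problem tolerating $f$ faults, with $T=3$ steps per round, message complexity $O(f+1)$ per round and signature complexity $O((f+1)^2)$ per round.
   Context: Model. There are $N$ processes $P_1,\dots,P_N$; $[N]=\{1,\dots,N\}$. Time proceeds in discrete steps $t=0,1,2,\dots$ (synchronous network). At each step every process first receives all messages sent to it at the previous step, each together with the identity of its sender, and then may send messages to any processes; the behaviour of an honest process is given by its protocol, a deterministic function of its inputs and of all messages it has received so far. Communication is authenticated: a process $P_j$ can sign a string $m$, producing $(m)_{P_j}$; every sent message is signed by its sender; no process other than $P_j$ can produce a string containing $(m)_{P_j}$ unless it copied it from a message it received, except that corrupted processes can produce signatures of any corrupted process. An $f$-adversary knows all protocols and all inputs (including future inputs), chooses at time $0$ a set of at most $f$ processes to corrupt, and makes them behave arbitrarily subject to the signature rule; the other processes are honest and follow their protocol. $\mathcal H$ denotes the set of honest processes. A protocol tolerates $f$ faults if its required properties hold against every $f$-adversary. Message complexity = number of messages sent by honest processes; signature complexity = number of signatures contained in messages sent by honest processes, counted with multiplicity (each nested signature and each repetition counts). Marker Problem ($K$ rounds of $T$ steps). Time is divided into $K$ consecutive rounds of $T$ steps. At the end of each round every honest process decides either ''unmarked'' or ''marked, with previous marked process $d$'' where $d\in[N]\cup\{\perp\}$. The marked process $M$ of round $1$ is $P_1$ if $P_1\in\mathcal H$ and $\perp$ otherwise; the marked process of round $i+1$ is the honest process that decided ''marked'' at the end of round $i$, or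 $\perp$ if there is none. At the beginning of round $i$, if $M\neq\perp$, $M$ receives an input $I_i\in[N]$ (''send the marker to $P_{I_i}$''). Required at the end of every round $i$: (consistency) at most one honest process decides it is marked; (liveness) if $M\in\mathcal H$, $I_i=n$ and $P_n\in\mathcal H$, then $P_n$ decides it is marked with previous marked process $M$; (non-impersonation) if $M=\perp$ and an honest process decides it is marked with previous marked process $d$, then $d\notin\mathcal H$. The message/signature complexity per round counts messages/signatures sent by honest processes during one round. Broadcast-process protocol. Fix $3f+1$ distinct processes, called broadcast processes. Each round $i$ consists of three steps. A ''proof that $Q$ is marked at round $i$'' is the empty string if $i=1$ and $Q=P_1$, and for $i>1$ is a collection of messages ''$X$ pays $Q$ at round $i-1$'' (for a single $X$) signed by at least $2f+1$ distinct broadcast processes. Step 1: the marked process $M$ with input $I_i=n$ sends the signed message ''I want to pay $P_n$ at round $i$'', together with its proof that it is marked at round $i$, to every broadcast process. Step 2: each honest broadcast process that received at least one such message carrying a valid proof (for round $i$) chooses one of them, say from $M$ to $P_n$, and sends the signed message ''$M$ pays $P_n$ at round $i$'' to $P_n$ only; it sends at most one such message per round. Step 3: a process $P_n$ that received messages ''$M$ pays $P_n$ at round $i$'' (same $M$) signed by at least $2f+1$ distinct broadcast processes decides that it is marked with previous marked process $M$, and keeps these messages as its proof that it is marked at round $i+1$; otherwise it decides it is unmarked. *)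

From mathcomp Require Import all_boot.
From Stdlib Require List.
Set Implicit Arguments. Unset Strict Implicit. Unset Printing Implicit Defensive.

(* Processes are P_1..P_N, identified with the naturals 1..N.               *)

(* Message contents ("strings"); [Sig j t] is the signature (t)_{P_j}.     *)
Inductive term : Type :=
| Atom of nat
| TNil
| Pair of term & term
| Sig of nat & term.

(* [t] occurs in [u] (copying a signed string out of a received message). *)
Inductive subterm : term -> term -> Prop :=
| sub_refl t : subterm t t
| sub_pairl t a b : subterm t a -> subterm t (Pair a b)
| sub_pairr t a b : subterm t b -> subterm t (Pair a b)
| sub_sig t j u : subterm t u -> subterm t (Sig j u).

Fixpoint nsig (t : term) : nat :=
  match t with
  | Atom _ | TNil => 0
  | Pair a b => nsig a + nsig b
  | Sig _ u => (nsig u).+1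
  end.

Fixpoint tlist (l : seq term) : term :=
  if l is a :: l' then Pair a (tlist l') else TNil.

Fixpoint untlist (t : term) : option (seq term) :=
  match t with
  | TNil => Some [::]
  | Pair a r => omap (cons a) (untlist r)
  | _ => None
  end.

Record msg := Msg { src : nat; dst : nat; body : term }.

(* A trace: [tr t] is the list of all messages sent at step t. *)
Definition trace := nat -> seq msg.

Definition recv (tr : trace) (p s : nat) : seq (nat * term) :=
  if s is s'.+1 then [seq (src m, body m) | m <- tr s' & dst m == p] else [::].

Definition view (tr : trace) (p t : nat) : nat -> seq (nat * term) :=
  fun s => if s <= t then recv tr p s else [::].

(* A deterministic protocol: what process p sends at step t (a list of
   (receiver, content)) and what it decides at the end of round i, as
   functions of its identity, its inputs (round -> input) and its view.
   Decision: None = "unmarked"; Some d = "marked, with previous marked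
   process d", where d = None encodes \perp. *)
Record protocol := Protocol {
  p_send : nat -> nat -> (nat -> option nat) -> (nat -> seq (nat * term))
           -> seq (nat * term);
  p_decide : nat -> nat -> (nat -> option nat) -> (nat -> seq (nat * term))
           -> option (option nat) }.

Definition inrange (N p : nat) : bool := (0 < p) && (p <= N).

Definition honest (N : nat) (C : seq nat) (p : nat) : bool :=
  inrange N p && (p \notin C).

(* inputs seen by p up to round i: I_j is given to p at round j iff p is
   the marked process M_j of round j *)
Definition inview (M : nat -> option nat) (I : nat -> nat) (p i : nat)
  : nat -> option nat :=
  fun j => if (0 < j <= i) && (M j == Some p) then Some (I j) else None.

(* Decision of p at the end of round i (rounds 1..K of T steps; round i is
   the steps T*(i-1) .. T*i - 1). *)
Definition decision (T : nat) (P : protocol) (tr : trace) (M : nat -> option nat)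
  (I : nat -> nat) (p i : nat) : option (option nat) :=
  p_decide P p i (inview M I p i) (view tr p (T * i).-1).

(* M i is the
   marked process of round i (None = \perp).  Corrupted processes behave
   arbitrarily subject to the signature rule. *)
Definition execution (N K T : nat) (P : protocol) (C : seq nat) (I : nat -> nat)
  (tr : trace) (M : nat -> option nat) : Prop :=
  [/\
      M 1 = (if honest N C 1 then Some 1 else None),
      (forall i, 0 < i < K ->
         match M i.+1 with
         | Some p => honest N C p /\ decision T P tr M I p i <> None
         | None => forall p, honest N C p -> decision T P tr M I p i = None
         end),
      (forall t p, t < K * T -> honest N C p ->
         [seq (dst m, body m) | m <- tr t & src m == p]
         = p_send P p t (inview M I p (t %/ T).+1) (view tr p t)),
      (forall t m, t < K * T -> List.In m (tr t) -> inrange N (src m)) &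
      (forall t m, t < K * T -> List.In m (tr t) -> src m \in C ->
         forall j x, honest N C j -> subterm (Sig j x) (body m) ->
         exists s, s <= t /\
           exists2 y, List.In y (recv tr (src m) s) & subterm (Sig j x) y.2)].

Definition marker_round_ok (N T : nat) (P : protocol) (C : seq nat)
  (I : nat -> nat) (tr : trace) (M : nat -> option nat) (i : nat) : Prop :=
  [/\
      (forall p q, honest N C p -> honest N C q ->
         decision T P tr M I p i <> None -> decision T P tr M I q i <> None ->
         p = q),
      (forall m n, M i = Some m -> honest N C m -> I i = n -> honest N C n ->
         decision T P tr M I n i = Some (Some m)) &
      (forall p d, M i = None -> honest N C p ->
         decision T P tr M I p i = Some d ->
         match d with Some d' => ~~ honest N C d' | None => true end)].

Definition msg_count_round (N T : nat) (C : seq nat) (tr : trace) (i : nat) : nat :=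
  \sum_(T * i.-1 <= t < T * i) count (fun m => honest N C (src m)) (tr t).

Definition sig_count_round (N T : nat) (C : seq nat) (tr : trace) (i : nat) : nat :=
  \sum_(T * i.-1 <= t < T * i)
     sumn [seq nsig (body m) | m <- tr t & honest N C (src m)].

(* "I want to pay P_n at round i" *)
Definition want_body (n i : nat) : term := Pair (Atom 0) (Pair (Atom n) (Atom i)).
(* "X pays Q at round i" *)
Definition pays_body (x q i : nat) : term :=
  Pair (Atom 1) (Pair (Atom x) (Pair (Atom q) (Atom i))).

Record pays_info := PaysInfo { ps_signer : nat; ps_payer : nat;
                               ps_payee : nat; ps_round : nat }.

Definition parse_pays (t : term) : option pays_info :=
  match t with
  | Sig b (Pair (Atom 1) (Pair (Atom x) (Pair (Atom q) (Atom r)))) =>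
      Some (PaysInfo b x q r)
  | _ => None
  end.

(* recognise a step-1 message: (I want to pay P_n at round r)_{P_s}, proof *)
Definition parse_want (t : term) : option (nat * nat * nat * term) :=
  match t with
  | Pair (Sig s (Pair (Atom 0) (Pair (Atom n) (Atom r)))) pr => Some (s, n, r, pr)
  | _ => None
  end.

Definition pays0 := PaysInfo 0 0 0 0.

(* "pr is a proof that Q is marked at round i" *)
Definition valid_proof (f : nat) (B : seq nat) (q i : nat) (pr : term) : bool :=
  if i == 1 then (q == 1) && (if pr is TNil then true else false)
  else match untlist pr with
       | Some l =>
           let ps := pmap parse_pays l in
           [&& size ps == size l,
               all (fun x => [&& ps_payee x == q, ps_round x == i.-1 &
                                 ps_payer x == ps_payer (head pays0 ps)]) ps &
               2 * f + 1 <= size (undup [seq ps_signer x | x <- ps & ps_signer x \in B])]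
       | None => false
       end.

Definition step2_cand (f : nat) (B : seq nat) (i : nat) (x : nat * term)
  : option (nat * nat) :=
  match parse_want x.2 with
  | Some (s, n, r, pr) =>
      if [&& s == x.1, r == i & valid_proof f B s i pr] then Some (x.1, n) else None
  | None => None
  end.

Definition pays_to (B : seq nat) (p i : nat) (rs : seq (nat * term)) : seq pays_info :=
  [seq x <- pmap (fun y => parse_pays y.2) rs |
     [&& ps_payee x == p, ps_round x == i & ps_signer x \in B]].

Definition signers_for (B : seq nat) (p i : nat) (rs : seq (nat * term)) (X : nat)
  : seq nat :=
  undup [seq ps_signer x | x <- pays_to B p i rs & ps_payer x == X].

Definition decided_prev (f : nat) (B : seq nat) (p i : nat) (rs : seq (nat * term))
  : option nat :=
  ohead [seq X <- undup (map ps_payer (pays_to B p i rs)) |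
           2 * f + 1 <= size (signers_for B p i rs X)].

Definition proof_of (f : nat) (B : seq nat) (p i : nat) (rs : seq (nat * term)) : term :=
  match decided_prev f B p i rs with
  | Some X => tlist [seq Sig b (pays_body X p i) | b <- signers_for B p i rs X]
  | None => TNil
  end.

(* sel b i l: the (deterministic) choice of broadcast process b at round i
   among the valid received requests l (list of (M, n)). *)
Definition bp_send (f : nat) (B : seq nat) (sel : nat -> nat -> seq (nat * nat) -> nat * nat)
  (p t : nat) (inp : nat -> option nat) (rcv : nat -> seq (nat * term))
  : seq (nat * term) :=
  let i := (t %/ 3).+1 in
  match t %% 3 with
  | 0 =>
      match inp i with
      | Some n =>
          let pr := if i == 1 then TNil else proof_of f B p i.-1 (rcv t.-1) in
          [seq (b, Pair (Sig p (want_body n i)) pr) | b <- B]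
      | None => [::]
      end
  | 1 =>
      if p \in B then
        match pmap (step2_cand f B i) (rcv t) with
        | [::] => [::]
        | c => let sn := sel p i c in [:: (sn.2, Sig p (pays_body sn.1 sn.2 i))]
        end
      else [::]
  | _ => [::]
  end.

Definition bp_decide (f : nat) (B : seq nat) (p i : nat) (inp : nat -> option nat)
  (rcv : nat -> seq (nat * term)) : option (option nat) :=
  omap Some (decided_prev f B p i (rcv (3 * i).-1)).

Definition broadcast_protocol (f : nat) (B : seq nat)
  (sel : nat -> nat -> seq (nat * nat) -> nat * nat) : protocol :=
  Protocol (bp_send f B sel) (bp_decide f B).

From Pilot Require Import Defs.
From mathcomp Require Import all_boot zify.
From HB Require Import structures.
Set Implicit Arguments. Unset Strict Implicit. Unset Printing Implicit Defensive.

(* Safety rests on quorum intersection: with 3f+1 broadcast processes of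
   which at most f are corrupted, any two sets of 2f+1 broadcast processes
   share an honest member (quorum_intersection).  By the signature rule, a
   signature of an honest process b on "X pays q at round r" found anywhere in
   the execution was produced by b itself at step 2 of round r
   (payment_signature_origin), and b pays for one request per round
   (paid_unique).  Hence two honest processes cannot both collect a quorum at
   the same round (consistency), and a quorum can only name a process that
   sent a request, which an honest process does only when marked
   (non_impersonation).  For liveness, the honest marked process m carries a
   valid proof, while a valid proof held by anybody else would rest on a
   quorum that, by the same argument, names m as payee; so every honest
   broadcast process pays m's chosen payee, which sees 2f+1 honest signatures
   naming m, and no other payer can have a quorum.  Per round, step 1 costs
   3f+1 messages of at most 3f+2 signatures, step 2 at most 3f+1 messages of
   one signature, and step 3 nothing. *)

Definition term_eq_dec : forall x y : term, {x = y} + {x <> y}.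
Proof. decide equality; apply: PeanoNat.Nat.eq_dec. Defined.
HB.instance Definition _ := hasDecEq.Build term (compareP term_eq_dec).

Definition msg_eq_dec : forall x y : msg, {x = y} + {x <> y}.
Proof. decide equality; [exact: term_eq_dec | exact: PeanoNat.Nat.eq_dec ..]. Defined.
HB.instance Definition _ := hasDecEq.Build msg (compareP msg_eq_dec).

Definition pays_info_eq_dec : forall x y : pays_info, {x = y} + {x <> y}.
Proof. decide equality; apply: PeanoNat.Nat.eq_dec. Defined.
HB.instance Definition _ := hasDecEq.Build pays_info (compareP pays_info_eq_dec).

Lemma In_mem (T : eqType) (x : T) (s : seq T) : List.In x s <-> x \in s.
Proof.
elim: s => [|y s IH] //=; rewrite in_cons; split.
  by case=> [->|/IH ->]; rewrite ?eqxx ?orbT.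
by case/orP=> [/eqP ->|/IH]; [left|right].
Qed.

(* Signed substrings.  A signature can only be found inside a string that
   contains at least as many signatures; in particular the only signature in
   a once-signed string is the outer one. *)
Lemma nsig_subterm a u : subterm a u -> nsig a <= nsig u.
Proof. by elim=> //= *; lia. Qed.

Lemma subterm_trans a b c : subterm a b -> subterm b c -> subterm a c.
Proof.
move=> Hab Hbc; elim: Hbc Hab => // [t x y _ IH|t x y _ IH|t j u _ IH] Hab.
- exact/sub_pairl/IH.
- exact/sub_pairr/IH.
- exact/sub_sig/IH.
Qed.

Lemma subterm_signed_flat b x b' y : subterm (Sig b x) (Sig b' y) -> nsig y = 0 ->
  b = b' /\ x = y.
Proof.
move=> H; inversion H; subst => // Hy.
by move/nsig_subterm: H2; rewrite /= Hy.
Qed.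

Lemma subterm_Pair b x u v : subterm (Sig b x) (Pair u v) ->
  subterm (Sig b x) u \/ subterm (Sig b x) v.
Proof. by move=> H; inversion H; [left|right]. Qed.

Lemma subterm_TNil b x : ~ subterm (Sig b x) TNil.
Proof. by move=> H; inversion H. Qed.

Lemma subterm_tlist b x l : subterm (Sig b x) (tlist l) ->
  exists2 y, y \in l & subterm (Sig b x) y.
Proof.
elim: l => [|a l IH] /= H; first by case: (subterm_TNil H).
case/subterm_Pair: H => [H|/IH [y Hy Hs]].
  by exists a; rewrite ?mem_head.
by exists y; rewrite ?in_cons ?Hy ?orbT.
Qed.

Lemma untlistK l : untlist (tlist l) = Some l.
Proof. by elim: l => //= a l ->. Qed.

Lemma untlist_subterm pr l y : untlist pr = Some l -> y \in l -> subterm y pr.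
Proof.
elim: pr l => [n||a _ r IH|j u _] l //=; first by case=> <-.
case E: (untlist r) => [l'|] //= [<-]; rewrite in_cons => /orP [/eqP ->|Hy].
  exact/sub_pairl/Defs.sub_refl.
exact/sub_pairr/(IH l').
Qed.

Lemma nsig_tlist l : nsig (tlist l) = sumn (map nsig l).
Proof. by elim: l => //= a l ->. Qed.

Lemma parse_paysP t x : parse_pays t = Some x ->
  t = Sig (ps_signer x) (pays_body (ps_payer x) (ps_payee x) (ps_round x)).
Proof.
rewrite /parse_pays => H; repeat match type of H with
  | context[match ?x with _ => _ end] => destruct x; try discriminate end.
by case: H => <-.
Qed.

Lemma parse_wantP t s n r pr : parse_want t = Some (s, n, r, pr) ->
  t = Pair (Sig s (want_body n r)) pr.
Proof.
rewrite /parse_want => H; repeat match type of H with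
  | context[match ?x with _ => _ end] => destruct x; try discriminate end.
by case: H => -> -> -> ->.
Qed.

Lemma pmap_parse_pays (S : seq nat) X q r :
  pmap parse_pays [seq Sig b (pays_body X q r) | b <- S] = [seq PaysInfo b X q r | b <- S].
Proof. by elim: S => //= b S ->. Qed.

Lemma ohead_filterP (T : Type) (P : pred T) s x : ohead (filter P s) = Some x -> P x.
Proof. by elim: s => //= a s IH; case: ifP => //= Pa [<-]. Qed.

Lemma ohead_filter_unique (T : eqType) (P : pred T) s x : x \in s -> P x ->
  (forall y, y \in s -> P y -> y = x) -> ohead (filter P s) = Some x.
Proof.
elim: s => //= a s IH; rewrite in_cons => Hx Px H.
case: ifP => Pa /=; first by rewrite (H a) // mem_head.
apply: IH => [|//|y Hy]; last by apply: H; rewrite in_cons Hy orbT.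
by case/orP: Hx => // /eqP Ex; rewrite -Ex Px in Pa.
Qed.

Lemma sumn_map_le (T : eqType) (g : T -> nat) s c :
  (forall x, x \in s -> g x <= c) -> sumn (map g s) <= size s * c.
Proof.
elim: s => //= a s IH H; rewrite mulSn; apply: leq_add; first by apply: H; rewrite mem_head.
by apply: IH => x Hx; apply: H; rewrite inE Hx orbT.
Qed.

Lemma count_le_sum_by_key (T : eqType) (P : pred T) (key : T -> nat) (B : seq nat) s :
  (forall x, x \in s -> P x -> key x \in B) ->
  count P s <= \sum_(p <- B) count (fun x => P x && (key x == p)) s.
Proof.
elim: s => [|a s IH] H /=; first by rewrite big1_seq.
rewrite big_split /=; apply: leq_add; last by apply: IH => x Hx; apply: H; rewrite inE Hx orbT.
case Pa: (P a) => //=.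
have: key a \in B by apply: H; rewrite ?mem_head.
elim: B {IH H} => // p B' IHB; rewrite in_cons big_cons.
case/orP => [/eqP ->|/IHB]; first by rewrite eqxx.
by move=> h; apply: leq_trans h (leq_addl _ _).
Qed.

Lemma quorum_intersection (f : nat) (B C S1 S2 : seq nat) :
  size B <= 3 * f + 1 -> size C <= f ->
  uniq S1 -> uniq S2 -> {subset S1 <= B} -> {subset S2 <= B} ->
  2 * f + 1 <= size S1 -> 2 * f + 1 <= size S2 ->
  exists b, [/\ b \in S1, b \in S2 & b \notin C].
Proof.
move=> sB sC u1 u2 s1 s2 h1 h2.
have union_le_B : size S2 + count (predC (mem S2)) S1 <= 3 * f + 1.
  rewrite -size_filter -size_cat; apply: leq_trans sB; apply: uniq_leq_size.
    rewrite cat_uniq u2 filter_uniq // andbT; apply/hasPn => x.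
    by rewrite mem_filter => /andP [].
  by move=> x; rewrite mem_cat => /orP [/s2 //|]; rewrite mem_filter => /andP [_ /s1].
case: (boolP (has (fun b => (b \in S2) && (b \notin C)) S1)).
  by case/hasP => b Hb /andP [Hb2 HbC]; exists b.
move/hasPn => common_in_C.
have : count (mem S2) S1 <= size C.
  rewrite -size_filter; apply: uniq_leq_size; first by rewrite filter_uniq.
  move=> x; rewrite mem_filter => /andP [Hx2 /common_in_C].
  by rewrite [_ \in S2]Hx2 /= negbK.
have split_S1 : count (mem S2) S1 + count (predC (mem S2)) S1 = size S1.
  exact: count_predC.
move=> common_le_C; exfalso; lia.
Qed.

Lemma many_outside (f : nat) (B C : seq nat) :
  uniq B -> size B = 3 * f + 1 -> size C <= f ->
  2 * f + 1 <= size [seq b <- B | b \notin C].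
Proof.
move=> uB sB sC.
have : count (mem C) B <= size C.
  rewrite -size_filter; apply: uniq_leq_size; first by rewrite filter_uniq.
  by move=> x; rewrite mem_filter => /andP [].
have := count_predC (mem C) B; rewrite size_filter sB.
by have -> : count (predC (mem C)) B = count (fun b => b \notin C) B by []; lia.
Qed.

Lemma recvP tr p s y : y \in recv tr p s -> exists s', s = s'.+1 /\
  exists2 m, m \in tr s' & dst m = p /\ y = (src m, body m).
Proof.
case: s => //= s /mapP [m]; rewrite mem_filter => /andP [/eqP Hd Hm] ->.
by exists s; split => //; exists m.
Qed.

Lemma mem_recv tr p s m : m \in tr s -> dst m = p -> (src m, body m) \in recv tr p s.+1.
Proof. by move=> Hm Hd; apply: map_f; rewrite mem_filter Hd eqxx. Qed.

Lemma step2_candP f B i x c : step2_cand f B i x = Some c -> exists n pr,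
  [/\ parse_want x.2 = Some (x.1, n, i, pr), valid_proof f B x.1 i pr & c = (x.1, n)].
Proof.
rewrite /step2_cand; case: (parse_want x.2) => [[[[s n] r] pr]|] //.
by case: ifP => // /and3P [/eqP -> /eqP -> Hv] [<-]; exists n, pr.
Qed.

Lemma signers_forP B p i rs X b : b \in signers_for B p i rs X ->
  b \in B /\ exists2 y, y \in rs & y.2 = Sig b (pays_body X p i).
Proof.
rewrite mem_undup => /mapP [x]; rewrite mem_filter => /andP [/eqP HX].
rewrite mem_filter => /andP [/and3P [/eqP Hq /eqP Hr HB]].
rewrite mem_pmap => /mapP [y Hy Ex] ->; split => //; exists y => //.
by rewrite (parse_paysP (esym Ex)) HX Hq Hr.
Qed.

Lemma signers_for_sub B p i rs X : {subset signers_for B p i rs X <= B}.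
Proof. by move=> b /signers_forP []. Qed.

Lemma decided_prev_quorum f B p i rs X : decided_prev f B p i rs = Some X ->
  2 * f + 1 <= size (signers_for B p i rs X).
Proof. exact: ohead_filterP. Qed.

(* The proof kept by a process that decided "marked" is a valid proof for the
   next round. *)
Lemma valid_proof_signers f B q r X S : uniq S -> {subset S <= B} -> 2 * f + 1 <= size S ->
  valid_proof f B q r.+2 (tlist [seq Sig b (pays_body X q r.+1) | b <- S]).
Proof.
move=> uS sSB hS; rewrite /valid_proof /= untlistK /= pmap_parse_pays !size_map eqxx /=.
have -> : [seq ps_signer x | x <- [seq PaysInfo b X q r.+1 | b <- S] & ps_signer x \in B] = S.
  elim: S uS sSB {hS} => //= b S IH /andP [_ uS] sSB.
  by rewrite sSB ?mem_head //= IH // => y Hy; apply: sSB; rewrite inE Hy orbT.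
rewrite undup_id // hS andbT.
case: S {uS sSB hS} => [|s0 S] //=; rewrite !eqxx /=.
by apply/allP => x /mapP [b _ ->]; rewrite /= !eqxx.
Qed.

Lemma valid_proofP f B q r pr : valid_proof f B q r.+2 pr ->
  exists X S, [/\ uniq S, {subset S <= B}, 2 * f + 1 <= size S &
    forall b, b \in S -> subterm (Sig b (pays_body X q r.+1)) pr].
Proof.
rewrite /valid_proof /=; case El: (untlist pr) => [l|] //.
set ps := pmap parse_pays l; case/and3P => _ /allP Hall Hsz.
set S := undup _ in Hsz.
exists (ps_payer (head pays0 ps)), S; split; [exact: undup_uniq| |exact: Hsz|].
  by move=> b; rewrite mem_undup => /mapP [x]; rewrite mem_filter => /andP [Hb _] ->.
move=> b; rewrite mem_undup => /mapP [x]; rewrite mem_filter => /andP [_ Hx] ->.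
have /and3P [/eqP Hq /eqP Hr /eqP HX] := Hall x Hx.
move: Hx; rewrite mem_pmap => /mapP [e He Ee].
by rewrite -Hq -Hr -HX -(parse_paysP (esym Ee)); apply: untlist_subterm El He.
Qed.

Lemma decided_prevE f B p i rs X : 2 * f + 1 <= size (signers_for B p i rs X) ->
  (forall Y, 2 * f + 1 <= size (signers_for B p i rs Y) -> Y = X) ->
  decided_prev f B p i rs = Some X.
Proof.
move=> HX Huniq; apply: ohead_filter_unique => [||Y _]; [|exact: HX|exact: Huniq].
have [b0] : exists b0, b0 \in signers_for B p i rs X.
  case: (signers_for B p i rs X) HX => [|b0 S]; first by rewrite addn1.
  by exists b0; rewrite mem_head.
rewrite !mem_undup => /mapP [x]; rewrite mem_filter => /andP [/eqP <- Hx] _.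
exact: map_f.
Qed.

Lemma nsig_proof_of f B p i rs : nsig (proof_of f B p i rs) <= size B.
Proof.
rewrite /proof_of; case: decided_prev => [X|//]; rewrite nsig_tlist -map_comp.
apply: leq_trans (sumn_map_le (c := 1) _) _ => [//|].
by rewrite muln1 uniq_leq_size ?undup_uniq //; apply: signers_for_sub.
Qed.

Lemma sum_round (F : nat -> nat) j :
  \sum_(3 * j.+1.-1 <= t < 3 * j.+1) F t = F (3 * j) + F (3 * j).+1 + F (3 * j).+2.
Proof.
rewrite (_ : 3 * j.+1 = (3 * j).+3) /=; last by lia.
rewrite big_ltn; last by lia.
rewrite big_ltn; last by lia.
rewrite big_ltn; last by lia.
by rewrite big_geq // addn0 !addnA.
Qed.

Section Execution.
Variables (N f K : nat) (B : seq nat) (sel : nat -> nat -> seq (nat * nat) -> nat * nat).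
Variables (C : seq nat) (I : nat -> nat) (tr : trace) (M : nat -> option nat).
Hypothesis B_uniq : uniq B.
Hypothesis B_size : size B = 3 * f + 1.
Hypothesis B_range : all (inrange N) B.
Hypothesis sel_in : forall b i l, l != [::] -> sel b i l \in l.
Hypothesis C_size : size C <= f.
Hypothesis exec : execution N K 3 (broadcast_protocol f B sel) C I tr M.

Local Notation hon := (honest N C).
Local Notation dec := (decision 3 (broadcast_protocol f B sel) tr M I).

Definition planned (p t : nat) : seq (nat * term) :=
  bp_send f B sel p t (inview M I p (t %/ 3).+1) (view tr p t).

Lemma honest_sends t p : t < K * 3 -> hon p ->
  [seq (dst m, body m) | m <- tr t & src m == p] = planned p t.
Proof. by case: exec => _ _ Hfollow _ _ Ht Hp; rewrite (Hfollow t p Ht Hp). Qed.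

Lemma sent_planned t m : t < K * 3 -> m \in tr t -> hon (src m) ->
  (dst m, body m) \in planned (src m) t.
Proof.
move=> Ht Hm Hp; rewrite -(honest_sends Ht Hp).
by apply: map_f; rewrite mem_filter eqxx Hm.
Qed.

Lemma planned_sent t p d x : t < K * 3 -> hon p -> (d, x) \in planned p t ->
  exists2 m, m \in tr t & [/\ src m = p, dst m = d & body m = x].
Proof.
move=> Ht Hp; rewrite -(honest_sends Ht Hp).
by case/mapP => m; rewrite mem_filter => /andP [/eqP Hs Hm] [-> ->]; exists m.
Qed.

Lemma honest_sender t m : t < K * 3 -> m \in tr t -> src m \notin C -> hon (src m).
Proof.
case: exec => _ _ _ Hsrc _ Ht Hm HC; rewrite /honest HC andbT.
by apply: Hsrc Ht _; apply/In_mem.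
Qed.

Lemma honest_of_B b : b \in B -> b \notin C -> hon b.
Proof. by move=> HbB HbC; rewrite /honest HbC andbT (allP B_range). Qed.

(* Round j+1 consists of the steps 3j, 3j+1 and 3j+2.  The proof attached to
   a request at its step 1, the valid requests a broadcast process holds at
   its step 2, and the payment it then sends: *)
Definition request_proof (p j : nat) : term :=
  if j.+1 == 1 then TNil else proof_of f B p j (recv tr p (3 * j).-1).

Definition requests (b j : nat) : seq (nat * nat) :=
  pmap (step2_cand f B j.+1) (recv tr b (3 * j).+1).

Definition payment (b j : nat) (c : seq (nat * nat)) : nat * term :=
  ((sel b j.+1 c).2, Sig b (pays_body (sel b j.+1 c).1 (sel b j.+1 c).2 j.+1)).

Lemma planned_step1 j p : planned p (3 * j) = if M j.+1 == Some p then
  [seq (b, Pair (Sig p (want_body (I j.+1) j.+1)) (request_proof p j)) | b <- B]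
  else [::].
Proof.
rewrite /planned /bp_send.
have -> : 3 * j %% 3 = 0 by lia.
have -> : 3 * j %/ 3 = j by lia.
by rewrite /inview /view leqnn leq_pred /=; case: (M j.+1 == Some p).
Qed.

Lemma planned_step2 j p : planned p (3 * j).+1 =
  if (p \in B) && (requests p j != [::]) then [:: payment p j (requests p j)] else [::].
Proof.
rewrite /planned /bp_send.
have -> : (3 * j).+1 %% 3 = 1 by lia.
have -> : (3 * j).+1 %/ 3 = j by lia.
rewrite /view leqnn -/(requests p j); case: (p \in B) => //.
by case: (requests p j).
Qed.

Lemma planned_step3 j p : planned p (3 * j).+2 = [::].
Proof. by rewrite /planned /bp_send; have -> : (3 * j).+2 %% 3 = 2 by lia. Qed.

Definition paid (b r X q : nat) : Prop := [/\ 0 < r, r <= K &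
  exists2 m, m \in tr (3 * r.-1).+1 & src m = b /\ body m = Sig b (pays_body X q r)].

Lemma payment_signature_step t m b X q r : t < K * 3 -> m \in tr t -> hon b ->
  subterm (Sig b (pays_body X q r)) (body m) ->
  paid b r X q \/
  exists s, s < t /\ exists2 m', m' \in tr s & subterm (Sig b (pays_body X q r)) (body m').
Proof.
move=> Ht Hm Hb Hsub; case: (boolP (src m \in C)) => HC.
  case: exec => _ _ _ _ Hrule.
  have [s [Hst [y /In_mem /recvP [s' [Es [m' Hm' [_ Ey]]]] Hy]]] :=
    Hrule t m Ht (proj2 (In_mem _ _) Hm) HC b _ Hb Hsub.
  by right; exists s'; split; [lia | exists m'; rewrite Ey in Hy].
have := sent_planned Ht Hm (honest_sender Ht Hm HC).
have [j [k [Hk Et]]] : exists j k, k < 3 /\ t = 3 * j + k.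
  by exists (t %/ 3), (t %% 3); rewrite ltn_pmod // mulnC -divn_eq.
subst t; move: Hsub; set p := src m.
case: k Hk Ht Hm => [|[|[|//]]] _ Ht Hm Hsub; rewrite ?addn0 ?addn1 ?addn2 in Ht Hm *.
- rewrite planned_step1; case: eqP => // _ /mapP [b0 _ [_ Ebody]].
  rewrite Ebody in Hsub; case/subterm_Pair: Hsub.
    by case/subterm_signed_flat.  (* the request signature is not a payment *)
  rewrite /request_proof; case: (j.+1 == 1); first by move/subterm_TNil.
  rewrite /proof_of; case: decided_prev => [X0|]; last by move/subterm_TNil.
  case/subterm_tlist => _ /mapP [b1 Hb1 ->] /subterm_signed_flat [] // Eb Epay; subst b1.
  have [_ [y Hy Ey]] := signers_forP Hb1.
  have [s' [Es [m' Hm' [_ Ey']]]] := recvP Hy.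
  right; exists s'; split; first by lia.
  by exists m' => //; rewrite -[body m']/((src m', body m').2) -Ey' Ey Epay; constructor.
- rewrite planned_step2; case: ifP => // _; rewrite inE => /eqP [_ Ebody].
  move: Hsub; rewrite Ebody => /subterm_signed_flat [] // -> [-> -> ->].
  by left; split; [lia|lia|exists m].
- by rewrite planned_step3.
Qed.

Lemma payment_signature_origin t m b X q r : t < K * 3 -> m \in tr t -> hon b ->
  subterm (Sig b (pays_body X q r)) (body m) -> paid b r X q.
Proof.
elim/ltn_ind: t m => t IH m Ht Hm Hb Hsub.
case: (payment_signature_step Ht Hm Hb Hsub) => [//|[s [Hst [m' Hm' Hsub']]]].
exact: (IH s Hst m' (ltn_trans Hst Ht) Hm' Hb Hsub').
Qed.

Lemma paid_unique b r X q Y q' : hon b -> paid b r X q -> paid b r Y q' -> X = Y /\ q = q'.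
Proof.
move=> Hb [Hr HrK [m0 Hm0 [Hs0 Hb0]]] [_ _ [m1 Hm1 [Hs1 Hb1]]].
case: r Hr HrK Hm0 Hm1 Hb0 Hb1 => // j _ HjK /= Hm0 Hm1 Hb0 Hb1.
have Ht : (3 * j).+1 < K * 3 by lia.
have := sent_planned Ht Hm0; have := sent_planned Ht Hm1.
rewrite Hs0 Hs1 Hb0 Hb1 !planned_step2 => /(_ Hb); case: ifP => // _.
rewrite !inE => /eqP E1 /(_ Hb) /eqP E0.
by injection E0; injection E1; intros; subst.
Qed.

Definition quorum (S : seq nat) : Prop :=
  [/\ uniq S, {subset S <= B} & 2 * f + 1 <= size S].

Lemma quorums_meet S1 S2 : quorum S1 -> quorum S2 ->
  exists b, [/\ b \in S1, b \in S2 & hon b].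
Proof.
move=> [u1 s1 h1] [u2 s2 h2].
have [b [Hb1 Hb2 HbC]] := quorum_intersection (eq_leq B_size) C_size u1 u2 s1 s2 h1 h2.
by exists b; split => //; apply: honest_of_B => //; apply: s1.
Qed.

Lemma signers_quorum p i rs X : 2 * f + 1 <= size (signers_for B p i rs X) ->
  quorum (signers_for B p i rs X).
Proof. by split; [exact: undup_uniq | exact: signers_for_sub |]. Qed.

Lemma decision_marked p i d : dec p i = Some d ->
  exists X, d = Some X /\ decided_prev f B p i (recv tr p (3 * i).-1) = Some X.
Proof.
rewrite /decision /= /bp_decide /view leqnn.
by case: decided_prev => //= X [<-]; exists X.
Qed.

Lemma signer_paid i p X b : 0 < i <= K ->
  b \in signers_for B p i (recv tr p (3 * i).-1) X -> hon b -> paid b i X p.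
Proof.
case/andP => Hi HiK Hb1 Hb.
have [_ [y Hy Ey]] := signers_forP Hb1.
have [s' [Es [m' Hm' [_ Ey']]]] := recvP Hy.
apply: (@payment_signature_origin s' m') => //; first by lia.
by rewrite -[body m']/((src m', body m').2) -Ey' Ey; constructor.
Qed.

(* Consistency: two honest processes deciding "marked" at the same round both
   hold a quorum of payments, and an honest common signer paid only one payee. *)
Lemma consistency i p q : 0 < i <= K -> dec p i <> None -> dec q i <> None -> p = q.
Proof.
move=> Hi; case E1: (dec p i) => [d1|] // _; case E2: (dec q i) => [d2|] // _.
have [X [_ D1]] := decision_marked E1; have [Y [_ D2]] := decision_marked E2.
have [b [Hb1 Hb2 Hb]] := quorums_meet (signers_quorum (decided_prev_quorum D1))
  (signers_quorum (decided_prev_quorum D2)).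
by have [_ ->] := paid_unique Hb (signer_paid Hi Hb1 Hb) (signer_paid Hi Hb2 Hb).
Qed.

(* Non-impersonation: an honest broadcast process only pays for requests whose
   sender sent a step-1 request, which an honest process does only when marked. *)
Lemma non_impersonation i p d : 0 < i <= K -> M i = None -> dec p i = Some d ->
  match d with Some d' => ~~ hon d' | None => true end.
Proof.
move=> Hi HM E; have [X [-> D]] := decision_marked E.
apply/negP => HX.
have [b [Hb1 _ Hb]] := quorums_meet (signers_quorum (decided_prev_quorum D))
  (signers_quorum (decided_prev_quorum D)).
have [_ HiK [m0 Hm0 [Hs0 Hb0]]] := signer_paid Hi Hb1 Hb.
case: i Hi HM {E D Hb1} HiK Hm0 Hb0 => // j _ HM HjK /= Hm0 Hb0.
have Ht : (3 * j).+1 < K * 3 by lia.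
have := sent_planned Ht Hm0; rewrite Hs0 planned_step2 => /(_ Hb).
case: ifP => // /andP [_ Hc]; rewrite inE Hb0 => /eqP [_ EX _].
move: (sel_in b j.+1 Hc) EX; case: (sel _ _ _) => X0 n0 /= + EX; subst X.
rewrite mem_pmap => /mapP [x Hx /esym /step2_candP [n [pr [_ _ [Ex _]]]]].
have [s' [[Es] [m' Hm' [_ Ex']]]] := recvP Hx; subst s' x.
have Ht' : 3 * j < K * 3 by lia.
rewrite /= in Ex; rewrite Ex in HX.
by move: (sent_planned Ht' Hm' HX); rewrite planned_step1 HM.
Qed.

Lemma marked_decided j m : j.+1 < K -> M j.+2 = Some m ->
  hon m /\ exists X, decided_prev f B m j.+1 (recv tr m (3 * j.+1).-1) = Some X.
Proof.
case: exec => _ HMs _ _ _ HK HM.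
have := HMs j.+1 (ltac:(lia)); rewrite HM => -[Hm Hdec]; split => //.
case Ed: (dec m j.+1) Hdec => [d|] // _.
by have [X [_ D]] := decision_marked Ed; exists X.
Qed.

(* Liveness.  The marked process m holds a valid proof of being marked ... *)
Lemma marked_proof_valid j m : j.+1 <= K -> M j.+1 = Some m ->
  valid_proof f B m j.+1 (request_proof m j).
Proof.
case: exec => HM1 _ _ _ _; case: j => [|j] HK HM.
  by rewrite HM1 in HM; case: (hon 1) HM => // -[<-].
have [_ [X D]] := marked_decided HK HM.
have [uS sS hS] := signers_quorum (decided_prev_quorum D).
by rewrite /request_proof /= /proof_of D; apply: valid_proof_signers uS sS hS.
Qed.

(* ... and it is the only process able to exhibit one: a valid proof for round
   j+2 contains a quorum of payments to its holder at round j+1, which meets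
   the quorum of payments to the marked process in an honest signer. *)
Lemma request_sender j m m' pr : j.+1 <= K -> M j.+1 = Some m -> m' \in tr (3 * j) ->
  subterm pr (body m') -> valid_proof f B (src m') j.+1 pr -> src m' = m.
Proof.
case: exec => HM1 _ _ _ _; case: j => [|j] HK HM Hm' Hsub.
  by rewrite HM1 in HM; case: (hon 1) HM => // -[<-] /andP [/eqP].
case/valid_proofP => X [S [uS sS hS HS]].
have [_ [Y D]] := marked_decided HK HM.
have [b [HbS HbD Hb]] :=
  quorums_meet (And3 uS sS hS) (signers_quorum (decided_prev_quorum D)).
have Ht : 3 * j.+1 < K * 3 by lia.
have P1 := payment_signature_origin Ht Hm' Hb (subterm_trans (HS b HbS) Hsub).
have P2 := @signer_paid j.+1 m Y b (ltac:(lia)) HbD Hb.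
by have [_ ->] := paid_unique Hb P1 P2.
Qed.

Lemma request_sent j m b : j.+1 <= K -> M j.+1 = Some m -> hon m -> b \in B ->
  exists2 m', m' \in tr (3 * j) & [/\ src m' = m, dst m' = b &
    body m' = Pair (Sig m (want_body (I j.+1) j.+1)) (request_proof m j)].
Proof.
move=> HK HM Hm HbB; apply: planned_sent => //; first by lia.
by rewrite planned_step1 HM eqxx; apply: (map_f (fun b => (b, _))).
Qed.

Lemma requests_of_marked j m b : j.+1 <= K -> M j.+1 = Some m -> hon m -> b \in B ->
  (m, I j.+1) \in requests b j /\ {in requests b j, forall c, c = (m, I j.+1)}.
Proof.
move=> HK HM Hm HbB; split.
  have [m' Hm' [Hs Hd Hbody]] := request_sent HK HM Hm HbB.
  rewrite mem_pmap; apply/mapP; exists (src m', body m'); first exact: mem_recv.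
  by rewrite /step2_cand /= Hbody /= Hs !eqxx marked_proof_valid.
move=> c; rewrite mem_pmap => /mapP [x Hx /esym /step2_candP [n [pr [Hp Hv ->]]]].
have [s' [[Es] [m' Hm' [_ Ex]]]] := recvP Hx; subst s' x.
have Hbody := parse_wantP Hp; rewrite /= in Hbody Hv *.
have Hsrc : src m' = m.
  by apply: (request_sender HK HM Hm' _ Hv); rewrite Hbody; apply/sub_pairr/Defs.sub_refl.
have Ht : 3 * j < K * 3 by lia.
have := sent_planned Ht Hm'; rewrite Hsrc planned_step1 HM eqxx => /(_ Hm) /mapP [b' _ E].
by rewrite Hbody in E; injection E => *; subst.
Qed.

Lemma honest_payment j m b : j.+1 <= K -> M j.+1 = Some m -> hon m -> b \in B -> b \notin C ->
  exists2 m1, m1 \in tr (3 * j).+1 &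
    [/\ src m1 = b, dst m1 = I j.+1 & body m1 = Sig b (pays_body m (I j.+1) j.+1)].
Proof.
move=> HK HM Hm HbB HbC; have [Hin Hall] := requests_of_marked HK HM Hm HbB.
have Hc : requests b j != [::] by case: (requests b j) Hin.
apply: planned_sent; [lia | exact: honest_of_B | ].
by rewrite planned_step2 HbB Hc /payment (Hall _ (sel_in _ _ Hc)) mem_head.
Qed.

(* Step 3: the payee holds 2f+1 honest signatures naming m, and by quorum
   intersection no other payer can have 2f+1 signers. *)
Lemma liveness i m n : 0 < i <= K -> M i = Some m -> hon m -> I i = n ->
  dec n i = Some (Some m).
Proof.
case: i => // j /andP [_ HK] HM Hm <-.
rewrite /decision /= /bp_decide /view leqnn.
set rs := recv tr (I j.+1) (3 * j.+1).-1.
have honest_signers : {subset [seq b <- B | b \notin C] <= signers_for B (I j.+1) j.+1 rs m}.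
  move=> b; rewrite mem_filter => /andP [HbC HbB].
  have [m1 Hm1 [_ Hd Hbody]] := honest_payment HK HM Hm HbB HbC.
  rewrite mem_undup; apply/mapP; exists (PaysInfo b m (I j.+1) j.+1) => //.
  rewrite mem_filter /= eqxx mem_filter /= !eqxx HbB mem_pmap.
  apply/mapP; exists (src m1, body m1); last by rewrite /= Hbody.
  by rewrite /rs (_ : (3 * j.+1).-1 = (3 * j).+2); [exact: mem_recv | lia].
have Hquorum : 2 * f + 1 <= size (signers_for B (I j.+1) j.+1 rs m).
  apply: leq_trans (many_outside B_uniq B_size C_size) _.
  by apply: uniq_leq_size honest_signers; rewrite filter_uniq.
rewrite (decided_prevE Hquorum) // => Y HY.
have [b [Hb1 Hb2 Hb]] := quorums_meet (signers_quorum HY) (signers_quorum Hquorum).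
have HiK : 0 < j.+1 <= K by [].
by have [-> _] := paid_unique Hb (signer_paid HiK Hb1 Hb) (signer_paid HiK Hb2 Hb).
Qed.

Lemma marked_honest j m : j.+1 <= K -> M j.+1 = Some m -> hon m.
Proof.
case: exec => HM1 _ _ _ _; case: j => [|j] HK HM; last by case: (marked_decided HK HM).
by rewrite HM1 in HM; case: ifP HM => // H [<-].
Qed.

Lemma step1_sender j x : j.+1 <= K -> x \in tr (3 * j) -> hon (src x) ->
  M j.+1 = Some (src x).
Proof.
move=> HK Hx Hh; have Ht : 3 * j < K * 3 by lia.
by have := sent_planned Ht Hx Hh; rewrite planned_step1; case: eqP.
Qed.

Lemma step1_cost j : j.+1 <= K ->
  count (fun x => hon (src x)) (tr (3 * j)) <= 3 * f + 1 /\
  sumn [seq nsig (body x) | x <- tr (3 * j) & hon (src x)] <= (3 * f + 1) * (3 * f + 2).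
Proof.
move=> HK; have Ht : 3 * j < K * 3 by lia.
case E: (M j.+1) => [m|]; last first.
  rewrite -size_filter (@eq_in_filter _ _ pred0) ?filter_pred0 // => x Hx.
  by apply/negP => Hh; rewrite (step1_sender HK Hx Hh) in E.
have Ef : [seq x <- tr (3 * j) | hon (src x)] = [seq x <- tr (3 * j) | src x == m].
  apply: eq_in_filter => x Hx; apply/idP/eqP => [Hh|->]; last exact: marked_honest E.
  by have := step1_sender HK Hx Hh; rewrite E => -[].
have Hplan := honest_sends Ht (marked_honest HK E).
rewrite planned_step1 E eqxx in Hplan.
rewrite -size_filter Ef; split.
  by rewrite -(size_map (fun x => (dst x, body x))) Hplan size_map B_size.
rewrite (_ : [seq nsig (body x) | x <- _] =
  [seq nsig y.2 | y <- [seq (dst x, body x) | x <- tr (3 * j) & src x == m]]); last first.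
  by rewrite -map_comp.
rewrite Hplan -map_comp -B_size; apply: sumn_map_le => b _ /=.
rewrite /request_proof; case: ifP => _ /=; first by lia.
by have := nsig_proof_of f B m j (recv tr m (3 * j).-1); rewrite B_size; lia.
Qed.

Lemma step2_message j x : j.+1 <= K -> x \in tr (3 * j).+1 -> hon (src x) ->
  src x \in B /\ nsig (body x) = 1.
Proof.
move=> HK Hx Hh; have Ht : (3 * j).+1 < K * 3 by lia.
have := sent_planned Ht Hx Hh; rewrite planned_step2.
by case: ifP => // /andP [HB _]; rewrite inE => /eqP [_ ->].
Qed.

Lemma step2_per_sender j p : j.+1 <= K ->
  count (fun x => hon (src x) && (src x == p)) (tr (3 * j).+1) <= 1.
Proof.
move=> HK; have Ht : (3 * j).+1 < K * 3 by lia.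
case Hp: (hon p); last first.
  rewrite (@eq_in_count _ _ pred0) ?count_pred0 // => x _ /=.
  by case: eqP => [->|]; rewrite ?Hp ?andbF.
rewrite (@eq_in_count _ _ (fun x => src x == p)); last first.
  by move=> x _ /=; case: eqP => [->|]; rewrite ?Hp ?andbF.
rewrite -size_filter -(size_map (fun x => (dst x, body x))) (honest_sends Ht Hp) planned_step2.
by case: ifP.
Qed.

Lemma step2_cost j : j.+1 <= K ->
  count (fun x => hon (src x)) (tr (3 * j).+1) <= 3 * f + 1 /\
  sumn [seq nsig (body x) | x <- tr (3 * j).+1 & hon (src x)] <= 3 * f + 1.
Proof.
move=> HK.
have Hcount : count (fun x => hon (src x)) (tr (3 * j).+1) <= 3 * f + 1.
  apply: leq_trans (count_le_sum_by_key (key := src) (B := B) _) _.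
    by move=> x Hx Hh; case: (step2_message HK Hx Hh).
  rewrite -B_size -sum1_size; apply: leq_sum => p _; exact: step2_per_sender.
split => //; apply: leq_trans Hcount; rewrite -size_filter -[size _]muln1.
apply: sumn_map_le => x; rewrite mem_filter => /andP [Hh Hx].
by case: (step2_message HK Hx Hh) => _ ->.
Qed.

Lemma step3_silent j : j.+1 <= K -> [seq x <- tr (3 * j).+2 | hon (src x)] = [::].
Proof.
move=> HK; have Ht : (3 * j).+2 < K * 3 by lia.
rewrite (@eq_in_filter _ _ pred0) ?filter_pred0 // => x Hx; apply/negP => Hh.
by have := sent_planned Ht Hx Hh; rewrite planned_step3.
Qed.

Lemma message_cost i : 0 < i <= K -> msg_count_round N 3 C tr i <= 6 * (f + 1).
Proof.
case: i => // j /andP [_ HK]; rewrite /msg_count_round sum_round.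
have [h1 _] := step1_cost HK; have [h2 _] := step2_cost HK.
have h3 : count (fun x => hon (src x)) (tr (3 * j).+2) = 0.
  by rewrite -size_filter step3_silent.
lia.
Qed.

Lemma signature_cost i : 0 < i <= K -> sig_count_round N 3 C tr i <= 12 * (f + 1) ^ 2.
Proof.
case: i => // j /andP [_ HK]; rewrite /sig_count_round sum_round.
have [_ h1] := step1_cost HK; have [_ h2] := step2_cost HK.
by rewrite step3_silent //=; nia.
Qed.

Lemma marker_round i : 0 < i <= K ->
  marker_round_ok N 3 (broadcast_protocol f B sel) C I tr M i.
Proof.
move=> Hi; split.
- by move=> p q _ _; apply: consistency.
- by move=> m n HM Hm HI _; apply: liveness.
- by move=> p d HM _; apply: non_impersonation.
Qed.

End Execution.

Theorem mainTheorem4 :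
  exists c1 c2 : nat,
  forall (N f K : nat) (B : seq nat)
         (sel : nat -> nat -> seq (nat * nat) -> nat * nat),
    3 * f < N ->
    uniq B -> size B = 3 * f + 1 -> all (inrange N) B ->
    (forall b i l, l != [::] -> sel b i l \in l) ->
  forall (C : seq nat) (I : nat -> nat) (tr : trace) (M : nat -> option nat),
    uniq C -> size C <= f -> all (inrange N) C ->
    (forall i, 0 < i <= K -> inrange N (I i)) ->
    execution N K 3 (broadcast_protocol f B sel) C I tr M ->
  forall i, 0 < i <= K ->
    [/\ marker_round_ok N 3 (broadcast_protocol f B sel) C I tr M i,
        msg_count_round N 3 C tr i <= c1 * (f + 1) &
        sig_count_round N 3 C tr i <= c2 * (f + 1) ^ 2].
Proof.
exists 6, 12 => N f K B sel _ B_uniq B_size B_range sel_in C I tr M _ C_size _ _ exec i Hi.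
split.
- exact: (marker_round B_uniq B_size B_range sel_in C_size exec Hi).
- exact: (message_cost B_uniq B_size B_range C_size exec Hi).
- exact: (signature_cost B_uniq B_size B_range C_size exec Hi).
Qed.
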